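(* Let $X,Y$ be complex Banach spaces, $\emptyset\ne I\subseteq\mathbb R^n$, let $\mathcal B$ be a non-empty collection of non-empty subsets of $X$ such that every $x\in X$ belongs to some $B\in\mathcal B$, and let $\mathrm R$ be a non-empty collection of sequences in $\mathbb R^n$ such that $\mathbf t+\mathbf b(l)\in I$ whenever $\mathbf t\in I$, $\mathbf b\in\mathrm R$, $l\in\mathbb N$, and such that every subsequence of a sequence in $\mathrm R$ belongs to $\mathrm R$. Suppose that for each $j\in\mathbb N$ the function $F_j:I\times X\to Y$ is $(\mathrm R,\mathcal B)$-multi-almost periodic. If for each $B\in\mathcal B$ there exists $\epsilon_B>0$ such that $(F_j)$ converges uniformly to a function $F:I\times X\to Y$ on $I\times\bigl(B^{\circ}\cup\bigcup_{x\in\partial B}B(x,\epsilon_B)\bigr)$, then $F$ is $(\mathrm R,\mathcal B)$-multi-almost periodic.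
   Context: A continuous function $F:I\times X\to Y$ is called $(\mathrm R,\mathcal B)$-multi-almost periodic if for every $B\in\mathcal B$ and every sequence $(\mathbf b_k)\in\mathrm R$ there exist a subsequence $(\mathbf b_{k_l})$ and a function $F^\ast:I\times X\to Y$ such that $\lim_{l\to\infty}F(\mathbf t+\mathbf b_{k_l};x)=F^\ast(\mathbf t;x)$ uniformly for $x\in B$, $\mathbf t\in I$. $B^\circ$ and $\partial B$ denote the interior and boundary of $B$ in $X$, and $B(x,\epsilon)$ is the closed ball of radius $\epsilon$ centred at $x$. *)

From mathcomp Require Import all_boot all_order all_algebra.
From mathcomp Require Import all_classical all_reals all_analysis.
From mathcomp Require Export complex.
Import numFieldNormedType.Exports.
Set Implicit Arguments. Unset Strict Implicit. Unset Printing Implicit Defensive.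
Import Order.TTheory GRing.Theory Num.Theory.
Local Open Scope classical_set_scope.
Local Open Scope ring_scope.
Local Open Scope complex_scope.

Definition boundary (T : topologicalType) (A : set T) : set T :=
  closure A `\` interior A.

Definition subseq_of (T : Type) (b' b : nat -> T) : Prop :=
  exists phi : nat -> nat, (forall k l, (k < l)%N -> (phi k < phi l)%N) /\
                           b' = b \o phi.

Definition multi_almost_periodic (R : realType) (n : nat)
  (X Y : normedModType R[i]) (I : set 'rV[R]_n)
  (Rs : set (nat -> 'rV[R]_n)) (Bs : set (set X))
  (F : 'rV[R]_n -> X -> Y) : Prop :=
  {within I `*` [set: X], continuous (fun p : 'rV[R]_n * X => F p.1 p.2)} /\
  forall B, Bs B -> forall b, Rs b ->
    exists phi : nat -> nat, (forall k l, (k < l)%N -> (phi k < phi l)%N) /\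
    exists Fs : 'rV[R]_n -> X -> Y,
      forall e : R[i], 0 < e -> exists N : nat, forall l, (N <= l)%N ->
        forall t x, I t -> B x -> `|F (t + b (phi l)) x - Fs t x| < e.

Definition unif_conv_on (R : realType) (n : nat)
  (X Y : normedModType R[i]) (I : set 'rV[R]_n) (S : set X)
  (Fj : nat -> 'rV[R]_n -> X -> Y) (F : 'rV[R]_n -> X -> Y) : Prop :=
  forall e : R[i], 0 < e -> exists N : nat, forall j, (N <= j)%N ->
    forall t x, I t -> S x -> `|Fj j t x - F t x| < e.

From mathcomp Require Import all_boot all_order all_algebra.
From mathcomp Require Import all_classical all_reals all_analysis.
From mathcomp Require Import complex unstable.
Import numFieldNormedType.Exports.
Set Implicit Arguments. Unset Strict Implicit. Unset Printing Implicit Defensive.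
Import Order.TTheory GRing.Theory Num.Theory.
Local Open Scope classical_set_scope.
Local Open Scope ring_scope.
Local Open Scope complex_scope.

(* The set S = B° ∪ ⋃_{x ∈ ∂B} B(x, ε_B) is a neighbourhood of every point of B,
   so F_j -> F locally uniformly and F is continuous.  Since Y is complete,
   multi-almost periodicity amounts to: every sequence of the family R has a
   subsequence along which the translates are uniformly Cauchy on I × B.  A
   diagonal extraction gives one subsequence b ∘ psi that works for all F_j at
   once, and an ε/3 argument through F_j, uniformly close to F on I × S, passes
   the Cauchy property on to F. *)

Lemma ltr_dist_splitr (K : numFieldType) (V : normedModType K) (a b c : V) (e : K) :
  `|a - b| < e / 2 -> `|b - c| < e / 2 -> `|a - c| < e.
Proof.
move=> ab bc; rewrite (splitr e).
by apply: le_lt_trans (ler_distD b a c) _; rewrite ltrD.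
Qed.

Lemma ltr_dist_split3 (K : numFieldType) (V : normedModType K) (a b c d : V) (e : K) :
  `|a - b| < e / 3 -> `|b - c| < e / 3 -> `|c - d| < e / 3 -> `|a - d| < e.
Proof.
move=> ab bc cd.
have -> : e = e / 3 + (e / 3 + e / 3).
  by rewrite addrA -mulr2n -mulrSr -[_ *+ 3]mulr_natr mulfVK // pnatr_eq0.
apply: le_lt_trans (ler_distD b a d) _; rewrite ltrD //.
by apply: le_lt_trans (ler_distD c b d) _; rewrite ltrD.
Qed.

(* From index j on, the diagonal sequence is related to the j-th nested
   extraction in this way. *)
Definition eventual_reindex (T : Type) (c' c : nat -> T) : Prop :=
  exists M, forall l, (M <= l)%N -> exists2 l', (l <= l')%N & c' l = c l'.

Lemma eventual_reindex_comp (T U : Type) (f : T -> U) (c' c : nat -> T) :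
  eventual_reindex c' c -> eventual_reindex (f \o c') (f \o c).
Proof.
by move=> [M reindex]; exists M => l /reindex [l' ll' eq_l]; exists l'; rewrite //= eq_l.
Qed.

Section UniformConvergence.
Context {K : numFieldType} {V : normedModType K} {T : Type}.
Implicit Types (D : set T) (u : nat -> T -> V) (f : T -> V).

Definition unif_cvg_on D u f : Prop := forall e : K, 0 < e ->
  exists N, forall l, (N <= l)%N -> forall p, D p -> `|u l p - f p| < e.

Definition unif_cauchy_on D u : Prop := forall e : K, 0 < e ->
  exists N, forall l m, (N <= l)%N -> (N <= m)%N -> forall p, D p ->
    `|u l p - u m p| < e.

Lemma unif_cvg_on_sub D D' u f : D' `<=` D -> unif_cvg_on D u f -> unif_cvg_on D' u f.
Proof.
move=> D'D cvg_u e e0; have [N HN] := cvg_u e e0.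
by exists N => l Nl p /D'D; exact: HN.
Qed.

Lemma unif_cvg_on_cauchy D u f : unif_cvg_on D u f -> unif_cauchy_on D u.
Proof.
move=> cvg_u e e0.
have e2 : 0 < e / 2 by rewrite divr_gt0.
have [N HN] := cvg_u _ e2.
exists N => l m Nl Nm p Dp; apply: (@ltr_dist_splitr _ _ _ (f p)); first exact: HN.
by rewrite distrC; exact: HN.
Qed.

Lemma unif_cauchy_on_reindex D u u' :
  unif_cauchy_on D u -> eventual_reindex u' u -> unif_cauchy_on D u'.
Proof.
move=> cauchy_u [M reindex] e e0; have [N HN] := cauchy_u e e0.
exists (maxn N M) => l m; rewrite !geq_max => /andP[Nl /reindex [l' ll' ->]].
move=> /andP[Nm /reindex [m' mm' ->]] p Dp.
by apply: HN => //; [exact: leq_trans ll'|exact: leq_trans mm'].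
Qed.

End UniformConvergence.

Lemma unif_cvg_on_setX (K : numFieldType) (V : normedModType K) (T1 T2 : Type) (A1 : set T1) (A2 : set T2)
    (u : nat -> T1 -> T2 -> V) (f : T1 -> T2 -> V) :
  unif_cvg_on (A1 `*` A2) (fun l p => u l p.1 p.2) (fun p => f p.1 p.2) <->
  (forall e : K, 0 < e -> exists N, forall l, (N <= l)%N ->
    forall t x, A1 t -> A2 x -> `|u l t x - f t x| < e).
Proof.
split=> cvg_u e e0; have [N HN] := cvg_u e e0; exists N => l Nl.
  by move=> t x A1t A2x; exact: (HN l Nl (t, x)).
by move=> [t x] [A1t A2x]; exact: HN.
Qed.

Lemma unif_cauchy_on_limit_comp (K : numFieldType) (V : normedModType K)
    (T U : Type) (E : set U) (w : nat -> U -> V)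
    (g : U -> V) (sigma : nat -> T -> U) (D : set T) :
  unif_cvg_on E w g -> (forall l p, D p -> E (sigma l p)) ->
  (forall j, unif_cauchy_on D (fun l p => w j (sigma l p))) ->
  unif_cauchy_on D (fun l p => g (sigma l p)).
Proof.
move=> cvg_w sigmaE cauchy_w e e0.
have e3 : 0 < e / 3 by rewrite divr_gt0.
have [j wj] := cvg_w _ e3; have [N HN] := cauchy_w j _ e3.
exists N => l m Nl Nm p Dp.
apply: (@ltr_dist_split3 _ _ _ (w j (sigma l p)) (w j (sigma m p))).
- by rewrite distrC; apply: wj => //; exact: sigmaE.
- exact: HN.
- by apply: wj => //; exact: sigmaE.
Qed.

Lemma unif_cauchy_on_cvg (K : numFieldType) (V : completeNormedModType K)
    (T : Type) (D : set T) (u : nat -> T -> V) :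
  unif_cauchy_on D u -> exists f, unif_cvg_on D u f.
Proof.
move=> cauchy_u.
have cvg_u p : D p -> cvg ((u ^~ p) @ \oo).
  move=> Dp; apply: cauchy_cvg; apply/cauchy_exP => e e0.
  have [N HN] := cauchy_u e e0.
  by exists (u N p), N => // m Nm; rewrite /= -ball_normE; exact: HN.
exists (fun p => lim ((u ^~ p) @ \oo)) => e e0.
have e2 : 0 < e / 2 by rewrite divr_gt0.
have [N HN] := cauchy_u _ e2.
exists N => l Nl p Dp.
have /cvgrPdist_lt /(_ _ e2) near_lim := cvg_u p Dp.
near \oo => m.
apply: (@ltr_dist_splitr _ _ _ (u m p)).
  by apply: HN => //; near: m; exact: nbhs_infty_ge.
by rewrite distrC; near: m.
Unshelve. all: by end_near.
Qed.

Lemma locally_unif_limit_continuous (K : numFieldType) (V : normedModType K)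
    (T : topologicalType) (A : set T) (u : nat -> T -> V) (f : T -> V) :
  (forall j, {within A, continuous u j}) ->
  (forall p, A p -> exists2 W, nbhs p W & unif_cvg_on (A `&` W) u f) ->
  {within A, continuous f}.
Proof.
move=> cont_u loc_cvg; apply/subspace_continuousP => p Ap.
apply/cvgrPdist_lt => e e0.
have e3 : 0 < e / 3 by rewrite divr_gt0.
have [W pW cvg_u] := loc_cvg p Ap.
have [N HN] := cvg_u _ e3.
have /subspace_continuousP /(_ p Ap) /cvgrPdist_lt /(_ _ e3) near_uN := cont_u N.
have AW_near : \forall q \near within A (nbhs p), (A `&` W) q.
  apply: filterI; first exact: withinT.
  by apply: cvg_within; exact: pW.
near=> q.
apply: (@ltr_dist_split3 _ _ _ (u N p) (u N q)).
- by rewrite distrC; apply: HN => //; split => //; exact: nbhs_singleton.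
- by near: q.
- by apply: HN => //; near: q.
Unshelve. all: by end_near.
Qed.

Lemma nbhs_interior_boundary_closed_balls (K : numFieldType) (X : pseudoMetricType K)
    (B : set X) (eps : K) (x : X) :
  0 < eps -> B x -> nbhs x (B° `|` \bigcup_(y in boundary B) closed_ball y eps).
Proof.
move=> eps0 Bx; have [intx|nintx] := pselect (B° x).
  by apply: filterS (nbhs_interior intx) => y; left.
apply: filterS (nbhsx_ballx _ _ eps0) => y xy; right; exists x.
  by split => //; exact: subset_closure.
exact: subset_closed_ball.
Qed.

Section DiagonalExtraction.
Variables (T : Type) (S : set (nat -> T)) (C : nat -> set (nat -> T)).
Hypothesis S_subseq : forall c c', S c -> subseq_of c' c -> S c'.
Variable g : nat -> (nat -> T) -> nat -> nat.
Hypothesis gP : forall j c, S c -> {homo g j c : k l / (k < l)%N} /\ C j (c \o g j c).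
Variable b : nat -> T.
Hypothesis Sb : S b.

Fixpoint nested_extraction k : nat -> nat :=
  if k is k'.+1 then nested_extraction k' \o g k' (b \o nested_extraction k') else id.

Lemma nested_extractionP k :
  S (b \o nested_extraction k) /\ {homo nested_extraction k : k l / (k < l)%N}.
Proof.
elim: k => [|k [S_k incr_k]] /=; first by split.
have [incr_g _] := gP k S_k.
split; last by move=> m m' mm'; exact/incr_k/incr_g.
by apply: (S_subseq S_k); exists (g k (b \o nested_extraction k)).
Qed.

Lemma nested_extraction_tail j k : (j <= k)%N ->
  forall m, exists2 m', (m <= m')%N & nested_extraction k m = nested_extraction j m'.
Proof.
elim: k => [|k IHk]; first by rewrite leqn0 => /eqP-> m; exists m.
rewrite leq_eqVlt => /orP[/eqP-> m|]; first by exists m.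
rewrite ltnS => /IHk tail_k m /=.
have [incr_g _] := gP k (nested_extractionP k).1.
have [m' gm_m' ->] := tail_k (g k (b \o nested_extraction k) m).
by exists m' => //; apply: leq_trans gm_m'; exact/mono_leq_infl/leq_mono.
Qed.

Definition diagonal_extraction l := nested_extraction l.+1 l.

Lemma diagonal_extraction_incr : {homo diagonal_extraction : k l / (k < l)%N}.
Proof.
apply: (homo_ltn ltn_trans) => l; rewrite /diagonal_extraction /=.
have [incr_g _] := gP l.+1 (nested_extractionP l.+1).1.
exact/(nested_extractionP l.+1).2/(mono_leq_infl (leq_mono incr_g)).
Qed.

Lemma diagonal_extractionP j : C j (b \o nested_extraction j.+1) /\
  eventual_reindex (b \o diagonal_extraction) (b \o nested_extraction j.+1).
Proof.
split; first exact: (gP j (nested_extractionP j).1).2.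
exists j => l jl; have [l' ll' eq_l] := @nested_extraction_tail j.+1 l.+1 jl l.
by exists l' => //=; rewrite /diagonal_extraction eq_l.
Qed.

End DiagonalExtraction.

Lemma diagonal_subseq (T : Type) (S : set (nat -> T)) (C : nat -> set (nat -> T))
    (b : nat -> T) :
  S b -> (forall c c', S c -> subseq_of c' c -> S c') ->
  (forall j c, S c -> exists2 phi, {homo phi : k l / (k < l)%N} & C j (c \o phi)) ->
  (forall j c c', C j c -> eventual_reindex c' c -> C j c') ->
  exists2 psi, {homo psi : k l / (k < l)%N} & forall j, C j (b \o psi).
Proof.
move=> Sb S_subseq extract C_reindex.
have /choice [g gP] : forall jc : nat * (nat -> T), exists phi,
    S jc.2 -> {homo phi : k l / (k < l)%N} /\ C jc.1 (jc.2 \o phi).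
  move=> [j c]; have [Sc|nSc] := pselect (S c); last by exists id => /nSc.
  by have [phi] := extract j c Sc; exists phi.
pose g' j c := g (j, c).
have g'P j c : S c -> {homo g' j c : k l / (k < l)%N} /\ C j (c \o g' j c).
  exact: (gP (j, c)).
exists (diagonal_extraction g' b).
  exact: (diagonal_extraction_incr S_subseq g'P Sb).
move=> j; have [Cj reindex] := diagonal_extractionP S_subseq g'P Sb j.
exact: C_reindex Cj reindex.
Qed.

Definition unif_cauchy_translates (R : realType) (n : nat) (X Y : normedModType R[i])
    (I : set 'rV[R]_n) (B : set X) (F : 'rV[R]_n -> X -> Y) (c : nat -> 'rV[R]_n) :=
  unif_cauchy_on (I `*` B) (fun l p => F (p.1 + c l) p.2).

Lemma unif_cauchy_translates_reindex (R : realType) (n : nat) (X Y : normedModType R[i])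
    (I : set 'rV[R]_n) (B : set X) (F : 'rV[R]_n -> X -> Y) (c c' : nat -> 'rV[R]_n) :
  unif_cauchy_translates I B F c -> eventual_reindex c' c ->
  unif_cauchy_translates I B F c'.
Proof.
move=> cauchy_c /(eventual_reindex_comp (fun v p => F (p.1 + v) p.2)).
exact: unif_cauchy_on_reindex.
Qed.

Lemma multi_almost_periodicP (R : realType) (n : nat) (X : normedModType R[i])
    (Y : completeNormedModType R[i]) (I : set 'rV[R]_n) (Rs : set (nat -> 'rV[R]_n))
    (Bs : set (set X)) (F : 'rV[R]_n -> X -> Y) :
  multi_almost_periodic I Rs Bs F <->
  {within I `*` [set: X], continuous (fun p => F p.1 p.2)} /\
  (forall B, Bs B -> forall c, Rs c ->
    exists2 phi, {homo phi : k l / (k < l)%N} & unif_cauchy_translates I B F (c \o phi)).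
Proof.
split=> -[cont_F MAP]; split=> // B BB c Rc.
  have [phi [phi_incr [Fs /unif_cvg_on_setX cvgFs]]] := MAP B BB c Rc.
  by exists phi => //; exact: unif_cvg_on_cauchy cvgFs.
have [phi phi_incr /unif_cauchy_on_cvg [G cvgG]] := MAP B BB c Rc.
exists phi; split => //; exists (fun t x => G (t, x)) => e e0.
have [N HN] := cvgG e e0.
by exists N => l Nl t x It Bx; exact: (HN l Nl (t, x)).
Qed.

Theorem proposition2p8 (R : realType) (n : nat)
  (X Y : completeNormedModType R[i])
  (I : set 'rV[R]_n) (Bs : set (set X)) (Rs : set (nat -> 'rV[R]_n))
  (Fj : nat -> 'rV[R]_n -> X -> Y) (F : 'rV[R]_n -> X -> Y) :
  I !=set0 ->
  Bs !=set0 ->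
  (forall B, Bs B -> B !=set0) ->
  (forall x : X, exists B, Bs B /\ B x) ->
  Rs !=set0 ->
  (forall t b l, I t -> Rs b -> I (t + b l)) ->
  (forall b b', Rs b -> subseq_of b' b -> Rs b') ->
  (forall j, multi_almost_periodic I Rs Bs (Fj j)) ->
  (forall B, Bs B -> exists2 eps : R[i], 0 < eps &
     unif_conv_on I (B° `|` \bigcup_(x in boundary B) closed_ball x eps) Fj F) ->
  multi_almost_periodic I Rs Bs F.
Proof.
move=> _ _ _ cover _ shiftI subseqR MAPj cvgF.
have cvgF_on B : Bs B -> exists2 S, (forall x, B x -> nbhs x S) &
    unif_cvg_on (I `*` S) (fun j p => Fj j p.1 p.2) (fun p => F p.1 p.2).
  move=> BB; have [eps eps0 cvgB] := cvgF B BB.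
  exists (B° `|` \bigcup_(y in boundary B) closed_ball y eps); last exact/unif_cvg_on_setX.
  by move=> x; exact: nbhs_interior_boundary_closed_balls.
apply/multi_almost_periodicP; split.
  apply: (@locally_unif_limit_continuous _ _ _ _ (fun j p => Fj j p.1 p.2)).
    by move=> j; exact: (MAPj j).1.
  move=> [t x] _; have [B [BB Bx]] := cover x; have [S Snbhs cvgS] := cvgF_on B BB.
  exists ([set: 'rV[R]_n] `*` S).
    by exists (setT, S) => //=; split; [exact: filterT|exact: Snbhs].
  by apply: unif_cvg_on_sub cvgS => -[t' x'] [[It' _] [_ Sx']].
move=> B BB b Rb; have [S Snbhs cvgS] := cvgF_on B BB.
have [psi psi_incr Cpsi] : exists2 psi, {homo psi : k l / (k < l)%N} &
    forall j, unif_cauchy_translates I B (Fj j) (b \o psi).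
  apply: (diagonal_subseq (C := fun j => unif_cauchy_translates I B (Fj j)) Rb subseqR)
    => [j c Rc|j c c'].
    by have /multi_almost_periodicP[_ extract] := MAPj j; exact: extract.
  exact: unif_cauchy_translates_reindex.
exists psi => //.
apply: (unif_cauchy_on_limit_comp (sigma := fun l p => (p.1 + b (psi l), p.2)) cvgS) => //.
by move=> l [t x] [It Bx]; split; [exact: shiftI|exact: nbhs_singleton (Snbhs x Bx)].
Qed.
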